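(* Let $A$ and $B$ be symmetric $N\times N$ real matrices, and suppose $B$ has only $K\le N$ non-zero eigenvalues $\lambda_1^B,\dots,\lambda_K^B$. Let $\lambda_1^A,\dots,\lambda_K^A$ be the $K$ largest in absolute value eigenvalues of $A$. Then $$\Big|\sum_{k=1}^K\lambda_k^A-\sum_{k=1}^K\lambda_k^B\Big|\le 3K\|A-B\|.$$
   Context: $\|\cdot\|$ denotes the spectral (operator) norm. Eigenvalues are counted with multiplicity. *)

From HB Require Import structures.
From mathcomp Require Import all_boot all_order all_algebra.
From mathcomp Require Import boolp classical_sets reals.
Set Implicit Arguments. Unset Strict Implicit. Unset Printing Implicit Defensive.
Import Order.TTheory GRing.Theory Num.Theory.
Local Open Scope ring_scope.
Local Open Scope classical_set_scope.

Definition vnorm (R : realType) (n : nat) (v : 'cV[R]_n) : R :=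
  Num.sqrt (\sum_(i < n) v i 0 ^+ 2).

Definition opnorm (R : realType) (n : nat) (M : 'M[R]_n) : R :=
  sup [set vnorm (M *m v) | v in [set v : 'cV[R]_n | vnorm v = 1]].

Definition eigenvalues_seq (R : realType) (n : nat) (M : 'M[R]_n) (s : seq R) : Prop :=
  char_poly M = \prod_(x <- s) ('X - x%:P).

From mathcomp Require Import all_boot all_order all_algebra.
From mathcomp Require Import reals complex sesquilinear spectral.
From mathcomp Require Import boolp classical_sets.
From mathcomp Require Import ring lra zify.
Set Implicit Arguments. Unset Strict Implicit. Unset Printing Implicit Defensive.
Import Order.TTheory GRing.Theory Num.Theory.
Local Open Scope ring_scope.
Local Open Scope sesquilinear_scope.

(* Let e = ||A - B||.  Diagonalising A and B over R[i], a dimension count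
   (Courant-Fischer) shows that for every t, A has at most as many eigenvalues
   above t + e as B has above t, and symmetrically; hence the i-th smallest
   eigenvalues of A and B differ by at most e (Weyl), which matches the
   eigenvalues of A with those of B.  Among the K eigenvalues of A of largest
   modulus, those matched with a nonzero eigenvalue of B are within e of it,
   and those matched with 0 have modulus at most e.  The nonzero eigenvalues of
   B left over are as many as the latter, and each is matched with an
   eigenvalue of A outside the top K, of modulus at most that of one matched
   with 0; so each has modulus at most 2e. *)

Section OperatorNorm.
Variables (R : realType) (n : nat).
Implicit Types (v : 'cV[R]_n) (M : 'M[R]_n).

Lemma vnorm_ge0 v : 0 <= vnorm v.
Proof. exact: sqrtr_ge0. Qed.

Lemma vnorm_eq0 v : vnorm v = 0 -> v = 0.
Proof.
move/eqP; rewrite sqrtr_eq0 le_eqVlt ltNge sumr_ge0 ?orbF => [|i _]; last first.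
  exact: sqr_ge0.
rewrite psumr_eq0 => [/allP v0|i _]; last exact: sqr_ge0.
apply/matrixP => i j; rewrite ord1 mxE; apply/eqP.
by rewrite -sqrf_eq0 (implyP (v0 i (mem_index_enum _))).
Qed.

Lemma vnormZ a v : vnorm (a *: v) = `|a| * vnorm v.
Proof.
rewrite /vnorm -sqrtr_sqr -sqrtrM ?sqr_ge0 // mulr_sumr.
by congr Num.sqrt; apply: eq_bigr => i _; rewrite mxE exprMn.
Qed.

Lemma vnormN v : vnorm (- v) = vnorm v.
Proof. by rewrite -scaleN1r vnormZ normrN normr1 mul1r. Qed.

Lemma vnorm_le_sum_norm v : vnorm v <= \sum_i `|v i 0|.
Proof.
rewrite -[leRHS]ger0_norm ?sumr_ge0 // -sqrtr_sqr ler_wsqrtr //.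
rewrite expr2 mulr_suml; apply: ler_sum => i _.
rewrite -real_normK ?num_real // expr2 ler_wpM2l //.
by rewrite (bigD1 i) //= lerDl sumr_ge0.
Qed.

Lemma normr_entry_le_vnorm v i : `|v i 0| <= vnorm v.
Proof.
rewrite -sqrtr_sqr ler_wsqrtr // (bigD1 i) //= lerDl.
by apply: sumr_ge0 => j _; exact: sqr_ge0.
Qed.

Lemma opnorm_has_ubound M :
  has_ubound [set vnorm (M *m v) | v in [set v | vnorm v = 1]].
Proof.
exists (\sum_i \sum_j `|M i j|) => _ [v /= v1 <-].
apply: le_trans (vnorm_le_sum_norm _) _; apply: ler_sum => i _.
rewrite mxE; apply: le_trans (ler_norm_sum _ _ _) _.
apply: ler_sum => j _; rewrite normrM ler_piMr //.
by rewrite -v1 normr_entry_le_vnorm.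
Qed.

Lemma opnorm_mulmx_le M v : vnorm (M *m v) <= opnorm M * vnorm v.
Proof.
have [/vnorm_eq0 -> | v_neq0] := eqVneq (vnorm v) 0.
  by rewrite mulmx0 -(scale0r 0) vnormZ normr0 !mul0r mulr0.
have v_gt0 : 0 < vnorm v by rewrite lt_def v_neq0 vnorm_ge0.
have u1 : vnorm ((vnorm v)^-1 *: v) = 1.
  by rewrite vnormZ ger0_norm ?invr_ge0 ?vnorm_ge0 // mulVf.
have := ub_le_sup (opnorm_has_ubound M) (ex_intro2 _ _ _ u1 erefl).
rewrite -scalemxAr vnormZ ger0_norm ?invr_ge0 ?vnorm_ge0 //.
by rewrite ler_pdivrMl // mulrC.
Qed.

Lemma opnormN M : opnorm (- M) = opnorm M.
Proof.
rewrite /opnorm; congr sup; apply/seteqP.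
by split=> _ [v v1 <-]; exists v => //; rewrite mulNmx vnormN.
Qed.

Lemma eigenvalue_le_opnorm M a : M^T = M -> eigenvalue M a -> `|a| <= opnorm M.
Proof.
move=> symM /eigenvalueP [v vM v_neq0].
have Mv : M *m v^T = a *: v^T by rewrite -[in LHS]symM -trmx_mul vM linearZ.
have vT_gt0 : 0 < vnorm v^T.
  rewrite lt_def vnorm_ge0 andbT; apply: contraNneq v_neq0 => /vnorm_eq0.
  by move/(congr1 trmx); rewrite trmxK trmx0 => ->.
by have := opnorm_mulmx_le M v^T; rewrite Mv vnormZ ler_pM2r.
Qed.
End OperatorNorm.

Lemma char_poly_similar (F : comUnitRingType) n (P M : 'M[F]_n) :
  P \in unitmx -> char_poly (invmx P *m M *m P) = char_poly M.
Proof.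
move=> P_unit; rewrite /char_poly.
have -> : char_poly_mx (invmx P *m M *m P) =
    map_mx polyC (invmx P) *m char_poly_mx M *m map_mx polyC P.
  rewrite /char_poly_mx mulmxBr mulmxBl -!map_mxM; congr (_ - _).
  by rewrite -mulmxA -scalar_mxC mulmxA -map_mxM mulVmx // map_mx1 mul1mx.
rewrite !det_mulmx !det_map_mx /= mulrC mulrA -rmorphM det_inv.
by rewrite mulrV -?unitmxE // rmorph1 mul1r.
Qed.

Lemma capmx_neq0 (F : fieldType) m p q (U : 'M[F]_(p, m)) (V : 'M[F]_(q, m)) :
  (m < \rank U + \rank V)%N -> (U :&: V)%MS != 0.
Proof.
rewrite -mxrank_eq0 -mxrank_sum_cap => lt_m; apply: contraTneq lt_m => ->.
by rewrite addn0 -leqNgt rank_leq_col.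
Qed.

Section UnitaryForms.
Variables (C : numClosedFieldType) (n : nat).
Implicit Types (P M : 'M[C]_n) (x d : 'rV[C]_n).

Definition qform M x : C := (x *m M *m x^t*) 0 0.

Lemma qformB M1 M2 x : qform (M1 - M2) x = qform M1 x - qform M2 x.
Proof. by rewrite /qform mulmxBr mulmxBl [LHS]mxE [X in _ + X]mxE. Qed.

Lemma qform_unitary_diag P d x : P \is unitarymx ->
  qform (P^t* *m diag_mx d *m P) x = \sum_j d 0 j * `|(x *m P^t*) 0 j| ^+ 2.
Proof.
move=> P_unitary; rewrite /qform.
have -> : x *m (P^t* *m diag_mx d *m P) *m x^t* =
    (x *m P^t*) *m diag_mx d *m (x *m P^t*)^t*.
  by rewrite trmx_mul map_mxM trmxCK !mulmxA.
rewrite mxE; apply: eq_bigr => j _.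
by rewrite mul_mx_diag !mxE normCK mulrA [_ * d 0 j]mulrC.
Qed.

Lemma dotmx_unitary P x : P \is unitarymx ->
  dotmx x x = \sum_j `|(x *m P^t*) 0 j| ^+ 2.
Proof.
move=> P_unitary; rewrite dotmxE.
have -> : x *m x^t* = (x *m P^t*) *m (x *m P^t*)^t*.
  by rewrite trmx_mul map_mxM trmxCK mulmxA mulmxKtV.
by rewrite mxE; apply: eq_bigr => j _; rewrite !mxE normCK.
Qed.

Lemma qform_unitary_diag_le P d x c : P \is unitarymx ->
  (forall j, (x *m P^t*) 0 j != 0 -> d 0 j <= c) ->
  qform (P^t* *m diag_mx d *m P) x <= c * dotmx x x.
Proof.
move=> P_unitary d_le.
rewrite qform_unitary_diag // (dotmx_unitary x P_unitary) mulr_sumr.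
rewrite -subr_ge0 -sumrB; apply: sumr_ge0 => j _; rewrite -mulrBl.
have [->|yj_neq0] := eqVneq ((x *m P^t*) 0 j) 0.
  by rewrite normr0 expr0n mulr0.
by rewrite mulr_ge0 ?exprn_ge0 // subr_ge0 d_le.
Qed.

Lemma qform_unitary_diag_gt P d x c : P \is unitarymx -> x != 0 ->
  (forall j, (x *m P^t*) 0 j != 0 -> c < d 0 j) ->
  c * dotmx x x < qform (P^t* *m diag_mx d *m P) x.
Proof.
move=> P_unitary x_neq0 d_gt.
have y_neq0 : x *m P^t* != 0.
  apply: contraNneq x_neq0 => y0.
  by rewrite -(mulmxKtV x P_unitary erefl) y0 mul0mx.
have [j yj_neq0] : exists j, (x *m P^t*) 0 j != 0.
  apply/existsP; apply: contraNT y_neq0; rewrite negb_exists => /forallP y0.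
  by apply/eqP/rowP => k; rewrite [RHS]mxE; apply/eqP/negbNE/y0.
rewrite qform_unitary_diag // (dotmx_unitary x P_unitary) mulr_sumr.
rewrite -subr_gt0 -sumrB (bigD1 j) //= -mulrBl ltr_wpDr //.
  apply: sumr_ge0 => k _; rewrite -mulrBl.
  have [->|yk_neq0] := eqVneq ((x *m P^t*) 0 k) 0.
    by rewrite normr0 expr0n mulr0.
  by rewrite mulr_ge0 ?exprn_ge0 // subr_ge0 ltW ?d_gt.
by rewrite mulr_gt0 ?exprn_gt0 ?normr_gt0 // subr_gt0 d_gt.
Qed.

Lemma rowsub_unitarymx m (f : 'I_m -> 'I_n) P :
  injective f -> P \is unitarymx -> rowsub f P \is unitarymx.
Proof.
move=> f_inj /unitarymxP /matrixP P_unitary; apply/unitarymxP/matrixP => k l.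
have := P_unitary (f k) (f l); rewrite !mxE (inj_eq f_inj) => <-.
by apply: eq_bigr => j _; rewrite !mxE.
Qed.

Lemma rowsub_unitary_coord P (S : {set 'I_n}) x j :
  P \is unitarymx -> (x <= rowsub (@enum_val _ (mem S)) P)%MS ->
  (x *m P^t*) 0 j != 0 -> j \in S.
Proof.
move=> P_unitary /submxP [D ->]; rewrite rowsubE mulmxA mulmxtVK // mxE.
apply: contraNT => jS; rewrite big1 // => k _; rewrite !mxE.
by case: eqP => [jE|]; [move: jS; rewrite -jE enum_valP | rewrite mulr0].
Qed.
End UnitaryForms.

Section RealSymmetric.
Variables (R : rcfType) (n : nat).
Local Notation toC := (real_complex R).
Local Notation diagC r := (diag_mx (\row_i toC (r i))).

Lemma toC_real (x : R) : toC x \is Num.real.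
Proof. by rewrite realE !lecR ?le_total // -realE num_real. Qed.

Lemma real_toC_Re (z : R[i]) : z \is Num.real -> z = toC (complex.Re z).
Proof.
case: z => a b; rewrite realE !lecE /= => /orP[] /andP[/eqP b0 _].
  by rewrite b0.
by rewrite -b0.
Qed.

Lemma symmetric_spectral (A : 'M[R]_n) : A^T = A ->
  exists P : 'M[R[i]]_n, exists r : 'I_n -> R,
  [/\ P \is unitarymx, map_mx toC A = P^t* *m diagC r *m P
    & char_poly A = \prod_i ('X - (r i)%:P)].
Proof.
move=> symA; set AC := map_mx toC A.
have AC_herm : AC \is hermsymmx.
  apply: realsym_hermsym.
    apply/is_hermitianmxP.
    by rewrite expr0 scale1r map_mx_id // /AC map_trmx symA.
  by apply/mxOverP => i j; rewrite mxE toC_real.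
have /orthomx_spectralP AC_diag := hermitian_normalmx AC_herm.
have /mxOverP d_real := hermitian_spectral_diag_real AC_herm.
exists (spectralmx AC), (fun i => complex.Re (spectral_diag AC 0 i)).
have dE : \row_i toC (complex.Re (spectral_diag AC 0 i)) = spectral_diag AC.
  by apply/rowP => i; rewrite mxE -real_toC_Re.
split; first exact: spectral_unitarymx.
  by rewrite dE -invmx_unitary ?spectral_unitarymx.
apply: (@map_poly_inj _ _ toC).
rewrite map_char_poly -/AC {1}AC_diag char_poly_similar ?spectral_unit //.
rewrite char_poly_trig ?diag_mx_is_trig // rmorph_prod; apply: eq_bigr => i _.
rewrite mxE eqxx mulr1n rmorphB /= map_polyX map_polyC /=.
by rewrite -[spectral_diag AC in LHS]dE mxE.
Qed.

Lemma unitary_diag_count_le (PA PB : 'M[R[i]]_n) (ra rb : 'I_n -> R) (e t : R) :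
  PA \is unitarymx -> PB \is unitarymx ->
  (forall x, qform (PA^t* *m diagC ra *m PA - PB^t* *m diagC rb *m PB) x
               <= toC e * dotmx x x) ->
  (#|[set i | (t + e < ra i)%R]| <= #|[set i | (t < rb i)%R]|)%N.
Proof.
move=> PA_unitary PB_unitary le_e.
set SA := [set i | t + e < ra i]; set SB := [set i | rb i <= t].
have cardSB : (#|SB| + #|[set i | (t < rb i)%R]|)%N = n.
  have -> : SB = ~: [set i | (t < rb i)%R].
    by apply/setP => i; rewrite !inE -leNgt.
  by rewrite addnC cardsC card_ord.
rewrite leqNgt; apply/negP => card_lt.
have /rowV0Pn [x] : (rowsub (@enum_val _ (mem SA)) PA :&:
                     rowsub (@enum_val _ (mem SB)) PB)%MS != 0.
  apply: capmx_neq0; rewrite !mxrank_unitary ?rowsub_unitarymx //;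
    [change (n < #|SA| + #|SB|)%N; lia | exact: enum_val_inj..].
rewrite sub_capmx => /andP [xA xB] x_neq0.
have gtA : toC (t + e) * dotmx x x < qform (PA^t* *m diagC ra *m PA) x.
  apply: qform_unitary_diag_gt => // j /(rowsub_unitary_coord PA_unitary xA).
  by rewrite mxE ltcR inE.
have leB : qform (PB^t* *m diagC rb *m PB) x <= toC t * dotmx x x.
  apply: qform_unitary_diag_le => // j /(rowsub_unitary_coord PB_unitary xB).
  by rewrite mxE lecR inE.
have := le_e x; rewrite qformB => /(lt_le_trans (ltr_leB gtA leB)).
by rewrite rmorphD mulrDl addrAC subrr add0r ltxx.
Qed.
End RealSymmetric.

Section SortedCounts.
Variable R : realDomainType.
Implicit Types (s a b : seq R) (c e : R).

Lemma sorted_nth_gtE s i c : sorted <=%R s -> (i < size s)%N ->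
  (c < nth 0 s i) = (size s - i <= count (fun x => (c < x)%R) s)%N.
Proof.
move=> srt lti.
apply/idP/idP => [lt_c | ].
  have /(order_path_min le_trans)/allP ge_nth :
      path <=%R (nth 0 s i) (drop i.+1 s).
    by rewrite -[path _ _ _]/(sorted _ (_ :: _)) -drop_nth // drop_sorted.
  have : all (fun x => c < x) (drop i s).
    rewrite (drop_nth 0 lti) /= lt_c; apply/allP => x xs.
    exact: lt_le_trans lt_c (ge_nth x xs).
  rewrite all_count -size_drop => /eqP <-.
  by rewrite -{2}(cat_take_drop i s) count_cat leq_addl.
apply: contraLR; rewrite -leNgt -ltnNge => le_c.
rewrite -{1}(cat_take_drop i.+1 s) count_cat.
have -> : count (fun x => c < x) (take i.+1 s) = 0%N.
  apply/eqP; rewrite -leqn0 leqNgt -has_count; apply/(has_nthP 0) => -[k].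
  rewrite size_takel // => ltk; rewrite nth_take //; apply/negP; rewrite -leNgt.
  apply: le_trans le_c; apply: (sorted_leq_nth le_trans lexx) => //.
  by rewrite inE (leq_trans ltk).
by rewrite add0n (leq_ltn_trans (count_size _ _)) // size_drop ltn_sub2l.
Qed.

Lemma sorted_nth_le_shift a b e : sorted <=%R a -> sorted <=%R b ->
  size a = size b ->
  (forall t,
     count (fun x => (t + e < x)%R) a <= count (fun x => (t < x)%R) b)%N ->
  forall i, (i < size a)%N -> nth 0 a i <= nth 0 b i + e.
Proof.
move=> sa sb eq_size count_le i lti; rewrite leNgt; apply/negP.
rewrite sorted_nth_gtE // => /leq_trans/(_ (count_le _)).
by rewrite eq_size -sorted_nth_gtE -?eq_size // ltxx.
Qed.

Lemma zip_sorted_dist_le a b e : sorted <=%R a -> sorted <=%R b ->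
  size a = size b ->
  (forall t,
     count (fun x => (t + e < x)%R) a <= count (fun x => (t < x)%R) b)%N ->
  (forall t,
     count (fun x => (t + e < x)%R) b <= count (fun x => (t < x)%R) a)%N ->
  forall p, p \in zip a b -> `|p.1 - p.2| <= e.
Proof.
move=> sa sb eq_size count_ab count_ba p.
case/(nthP (0, 0)) => i; rewrite size_zip -eq_size minnn => lti <-.
rewrite nth_zip //= ler_distl.
rewrite (sorted_nth_le_shift sa sb) // lerBlDr.
by rewrite (sorted_nth_le_shift sb sa) // -eq_size.
Qed.
End SortedCounts.

Section Weyl.
Variables (R : realType) (n : nat).
Local Notation toC := (real_complex R).
Implicit Types (A B M : 'M[R]_n) (s : seq R).

Lemma qform_le_opnorm M x : M^T = M ->
  qform (map_mx toC M) x <= toC (opnorm M) * dotmx x x.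
Proof.
move=> symM; have [P [r [P_unitary -> cpM]]] := symmetric_spectral symM.
apply: qform_unitary_diag_le => // j _; rewrite mxE lecR.
apply: le_trans (ler_norm _) (eigenvalue_le_opnorm symM _).
rewrite eigenvalue_root_char cpM /root horner_prod (bigD1 j) //=.
by rewrite hornerXsubC subrr mul0r.
Qed.

Lemma size_eigenvalues_seq M s : eigenvalues_seq M s -> size s = n.
Proof.
by move=> eM; have := size_char_poly M; rewrite eM size_prod_XsubC => -[].
Qed.

Lemma eigenvalues_seq_count M (r : 'I_n -> R) s (a : pred R) :
  char_poly M = \prod_i ('X - (r i)%:P) -> eigenvalues_seq M s ->
  count a s = #|[set i | a (r i)]|.
Proof.
move=> cpM eM.
have /permP -> : perm_eq s [seq r i | i <- enum 'I_n].
  by apply: prod_XsubC_eq; rewrite -eM cpM big_map big_enum.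
by rewrite count_map cardsE cardE size_filter enumT.
Qed.

Lemma eigenvalues_count_shift A B sA sB t : A^T = A -> B^T = B ->
  eigenvalues_seq A sA -> eigenvalues_seq B sB ->
  (count (fun x => (t + opnorm (A - B) < x)%R) sA
     <= count (fun x => (t < x)%R) sB)%N.
Proof.
move=> symA symB eA eB.
have [PA [ra [PA_unitary Aeq cpA]]] := symmetric_spectral symA.
have [PB [rb [PB_unitary Beq cpB]]] := symmetric_spectral symB.
rewrite (eigenvalues_seq_count _ cpA eA) (eigenvalues_seq_count _ cpB eB).
apply: (unitary_diag_count_le t PA_unitary PB_unitary) => x.
rewrite -Aeq -Beq -map_mxB; apply: qform_le_opnorm.
by rewrite linearB /= symA symB.
Qed.

Lemma weyl_sorted_eigenvalues A B sA sB : A^T = A -> B^T = B ->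
  eigenvalues_seq A sA -> eigenvalues_seq B sB ->
  forall p, p \in zip (sort <=%R sA) (sort <=%R sB) ->
  `|p.1 - p.2| <= opnorm (A - B).
Proof.
move=> symA symB eA eB.
apply: zip_sorted_dist_le; try exact: (sort_sorted le_total).
- by rewrite !size_sort (size_eigenvalues_seq eA) (size_eigenvalues_seq eB).
- by move=> t; rewrite !count_sort eigenvalues_count_shift.
- by move=> t; rewrite !count_sort -opnormN opprB eigenvalues_count_shift.
Qed.
End Weyl.

Lemma perm_map_lift (T U : eqType) (f : T -> U) (s : seq T) (t : seq U) :
  perm_eq (map f s) t -> exists2 s', perm_eq s s' & map f s' = t.
Proof.
elim: t s => [|y t IH] s pst.
  by exists [::]; [move/perm_size: pst; case: s | ].
have /mapP [x xs yE] : y \in map f s by rewrite (perm_mem pst) mem_head.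
have /IH [s' ps' <-] : perm_eq (map f (rem x s)) t.
  rewrite -(perm_cons y); apply: perm_trans _ pst.
  by rewrite yE perm_sym -map_cons perm_map // perm_to_rem.
exists (x :: s'); last by rewrite yE.
by apply: perm_trans (perm_to_rem xs) _; rewrite perm_cons.
Qed.

Lemma sorted_take_drop (T : eqType) (r : rel T) (s : seq T) k x y :
  transitive r -> sorted r s -> x \in take k s -> y \in drop k s -> r x y.
Proof.
move=> r_trans; rewrite -[s in sorted _ s](cat_take_drop k) sorted_pairwise //.
by rewrite pairwise_cat => /and3P [/allrelP + _ _]; apply.
Qed.

Section TopSums.
Variable R : realDomainType.

Lemma ler_norm_sum_count (T : eqType) (s : seq T) (Q : pred T) (f : T -> R) c :
  (forall p, p \in s -> Q p -> `|f p| <= c) ->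
  `|\sum_(p <- s | Q p) f p| <= (count Q s)%:R * c.
Proof.
move=> le_c; apply: le_trans (ler_norm_sum _ _ _) _.
rewrite big_seq_cond (le_trans (ler_sum _ (G := fun=> c) _)) //.
  by move=> p /andP[]; exact: le_c.
by rewrite -big_seq_cond big_const_seq iter_addr addr0 mulr_natl.
Qed.

Lemma sum_take_matching_le (Z : seq (R * R)) e K :
  (forall p, p \in Z -> `|p.1 - p.2| <= e) ->
  sorted (fun p q => `|q.1| <= `|p.1|) Z ->
  count (fun p => p.2 != 0) Z = K ->
  `|\sum_(p <- take K Z) p.1 - \sum_(p <- Z | p.2 != 0) p.2| <= 3 * K%:R * e.
Proof.
move=> near sZ cK.
have [e_ge0 | e_lt0] := leP 0 e; last first.
  have Z0 : Z = [::].
    case: Z near {sZ cK} => // p Z' /(_ p (mem_head p Z')).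
    by move/(le_trans (normr_ge0 _)); rewrite leNgt e_lt0.
  by rewrite -cK Z0 !big_nil subrr normr0 !mulr0 mul0r.
set P := fun p : R * R => p.2 != 0.
set L1 := take K Z; set L2 := drop K Z.
have ZE : Z = L1 ++ L2 by rewrite cat_take_drop.
have near1 p : p \in L1 -> `|p.1 - p.2| <= e.
  by move=> pL; apply: near; rewrite ZE mem_cat pL.
have near2 p : p \in L2 -> `|p.1 - p.2| <= e.
  by move=> pL; apply: near; rewrite ZE mem_cat pL orbT.
have sizeL1 : size L1 = K by rewrite size_takel // -cK count_size.
set c1 := count P L1.
have c1_le : (c1 <= K)%N by rewrite -sizeL1 count_size.
have cP2 : count P L2 = (K - c1)%N.
  by move: cK; rewrite ZE count_cat => <-; rewrite addKn.
have cN1 : count (predC P) L1 = (K - c1)%N.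
  by rewrite -sizeL1 -(count_predC P L1) addKn.
have tail_le q : q \in L2 -> P q -> `|q.2| <= e + e.
  move=> qL Pq.
  have /hasP [p pL /negbNE /eqP p2_0] : has (predC P) L1.
    by rewrite has_count cN1 -cP2 -has_count; apply/hasP; exists q.
  have q_le_p : `|q.1| <= `|p.1|.
    by apply: (sorted_take_drop _ sZ pL qL) => x y w /[swap]; apply: le_trans.
  have := near1 p pL; rewrite p2_0 subr0 => p_le.
  have := ler_normB q.1 (q.1 - q.2); rewrite opprB addrC subrK => q2_le.
  by apply: le_trans q2_le (lerD (le_trans q_le_p p_le) (near2 q qL)).
have b1 : `|\sum_(p <- L1 | P p) (p.1 - p.2)| <= c1%:R * e.
  by apply: ler_norm_sum_count => p pL _; exact: near1.
have b2 : `|\sum_(p <- L1 | ~~ P p) p.1| <= (K - c1)%:R * e.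
  rewrite -cN1; apply: ler_norm_sum_count => p pL /negbNE /eqP p2_0.
  by have := near1 p pL; rewrite p2_0 subr0.
have b3 : `|\sum_(p <- L2 | P p) p.2| <= (K - c1)%:R * (e + e).
  by rewrite -cP2; apply: ler_norm_sum_count.
have -> : \sum_(p <- L1) p.1 - \sum_(p <- Z | P p) p.2 =
    \sum_(p <- L1 | P p) (p.1 - p.2) + \sum_(p <- L1 | ~~ P p) p.1
    - \sum_(p <- L2 | P p) p.2.
  by rewrite (bigID P) ZE big_cat sumrB /=; ring.
apply: le_trans (ler_normB _ _) _; apply: le_trans (lerD (ler_normD _ _) b3) _.
apply: le_trans (lerD (lerD b1 b2) (lexx _)) _.
rewrite -[in X in _ <= X](subnKC c1_le) natrD.
have := mulr_ge0 (ler0n R c1) e_ge0; lra.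
Qed.

Lemma sum_topK_matching_le (s t : seq R) (Z : seq (R * R)) e K :
  (forall p, p \in Z -> `|p.1 - p.2| <= e) ->
  perm_eq (unzip1 Z) s -> perm_eq (unzip2 Z) t ->
  sorted (fun x y => `|y| <= `|x|) s -> count (fun y => y != 0) t = K ->
  `|\sum_(x <- take K s) x - \sum_(y <- t | y != 0) y| <= 3 * K%:R * e.
Proof.
move=> near /perm_map_lift [Z' pZ <-] pZt sZ' cK.
have pZ't : perm_eq (map snd Z') t.
  by apply: perm_trans _ pZt; rewrite perm_map // perm_sym.
rewrite -map_take big_map -(perm_big _ pZ't) big_map.
apply: sum_take_matching_le.
- by move=> p; rewrite -(perm_mem pZ); exact: near.
- by move: sZ'; rewrite sorted_map.
- by rewrite -cK -(permP pZ't) count_map.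
Qed.
End TopSums.

Theorem lemmaA1 (R : realType) (N K : nat) (A B : 'M[R]_N)
  (sA sB sA' : seq R) :
  A^T = A -> B^T = B ->
  eigenvalues_seq A sA -> eigenvalues_seq B sB ->
  count (fun x => x != 0) sB = K ->
  (* sA' : the eigenvalues of A, ordered by nonincreasing absolute value *)
  perm_eq sA' sA -> sorted (fun x y => `|y| <= `|x|) sA' ->
  `| \sum_(x <- take K sA') x - \sum_(x <- sB | x != 0) x |
    <= 3 * K%:R * opnorm (A - B).
Proof.
move=> symA symB eA eB cK pA' sA'_sorted.
have eq_size : size (sort <=%R sA) = size (sort <=%R sB).
  by rewrite !size_sort (size_eigenvalues_seq eA) (size_eigenvalues_seq eB).
apply: (sum_topK_matching_le (Z := zip (sort <=%R sA) (sort <=%R sB))) => //.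
- exact: weyl_sorted_eigenvalues.
- by rewrite unzip1_zip ?eq_size // perm_sort perm_sym.
- by rewrite unzip2_zip ?eq_size // perm_sort.
Qed.
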